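(* Let $p$ be a prime and $N\geq p$ an integer, and let $\mathcal E_{N,p}$ be the $\mathbb{R}_{\max}$-module of continuous convex piecewise affine functions $f$ on $[1,p]$ with integral slopes such that $f(1)=f(p)$ and $-f'_+(1)+pf'_-(p)\leq N$ (operations: pointwise max, and addition of real constants). Let $\phi_0=0$ and, for $a\in\{1,\dots,N-p\}$, $\phi_a(x)=\max\{-a(x-1),b(x-p)\}$ with $b=\lfloor(N-a)/p\rfloor$. Then each $\phi_a$, $0\leq a\leq N-p$, is an extremal element of $\mathcal E_{N,p}$; the sets $\{\phi_a+x\mid x\in\mathbb{R}_{\max}\}$ are exactly the extremal rays of $\mathcal E_{N,p}$; and these elements generate $\mathcal E_{N,p}$, i.e. the map $\sigma:\mathbb{R}_{\max}^{N-p+1}\to\mathcal E_{N,p}$, $\sigma((x_a))=\max_a(\phi_a+x_a)$, is surjective.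
   Context: $\mathbb{R}_{\max}=\mathbb{R}\cup\{-\infty\}$ with addition $\max$ and multiplication $+$ (so $\phi+(-\infty)$ is the zero element $-\infty$). An element $f$ of an $\mathbb{R}_{\max}$-module is extremal if $f_1\vee f_2=f$ implies $f_1=f$ or $f_2=f$; the set $\{f+x\mid x\in\mathbb{R}_{\max}\}$ for extremal $f$ is called an extremal ray. *)

From Stdlib Require Import Reals ZArith Znumtheory List.
From Coquelicot Require Import Coquelicot.
Open Scope R_scope.

(* R_max = R ∪ {-oo}: None is -oo. *)
Definition Rmx := option R.

(* An element of the R_max-module of functions [1,p] -> R_max that are either
   identically -oo (None) or real valued (Some f, f only relevant on [1,p]). *)
Definition elt := option (R -> R).

Definition in_dom (p : nat) (x : R) : Prop := 1 <= x <= INR p.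

Definition elt_eq (p : nat) (f g : elt) : Prop :=
  match f, g with
  | None, None => True
  | Some f, Some g => forall x, in_dom p x -> f x = g x
  | _, _ => False
  end.

Definition ejoin (f g : elt) : elt :=
  match f, g with
  | None, _ => g
  | _, None => f
  | Some f, Some g => Some (fun x => Rmax (f x) (g x))
  end.

Definition eshift (f : elt) (c : Rmx) : elt :=
  match f, c with
  | Some f, Some c => Some (fun x => f x + c)
  | _, _ => None
  end.

Definition cont_on (a b : R) (f : R -> R) : Prop :=
  forall x, a <= x <= b ->
    filterlim f (within (fun y => a <= y <= b) (locally x)) (locally (f x)).

Definition convex_on (a b : R) (f : R -> R) : Prop :=
  forall x y l, a <= x <= b -> a <= y <= b -> 0 <= l <= 1 ->
    f (l * x + (1 - l) * y) <= l * f x + (1 - l) * f y.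

Definition pw_affine_int (a b : R) (f : R -> R) : Prop :=
  exists (n : nat) (t : nat -> R) (s : nat -> Z) (c : nat -> R),
    t 0%nat = a /\ t n = b /\
    (forall i, (i < n)%nat -> t i < t (S i)) /\
    (forall i x, (i < n)%nat -> t i <= x <= t (S i) -> f x = IZR (s i) * x + c i).

Definition right_deriv (f : R -> R) (x d : R) : Prop :=
  filterlim (fun h => (f (x + h) - f x) / h) (at_right 0) (locally d).
Definition left_deriv (f : R -> R) (x d : R) : Prop :=
  filterlim (fun h => (f (x + h) - f x) / h) (at_left 0) (locally d).

Definition in_E (N p : nat) (F : elt) : Prop :=
  match F with
  | None => True
  | Some f =>
      cont_on 1 (INR p) f /\ convex_on 1 (INR p) f /\ pw_affine_int 1 (INR p) f /\
      f 1 = f (INR p) /\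
      exists dl dr, right_deriv f 1 dl /\ left_deriv f (INR p) dr /\
                    - dl + INR p * dr <= INR N
  end.

Definition extremal (N p : nat) (f : elt) : Prop :=
  in_E N p f /\ f <> None /\
  forall f1 f2, in_E N p f1 -> in_E N p f2 ->
    elt_eq p (ejoin f1 f2) f -> elt_eq p f1 f \/ elt_eq p f2 f.

Definition same_ray (p : nat) (f g : elt) : Prop :=
  forall h, (exists x : Rmx, elt_eq p h (eshift f x)) <->
            (exists y : Rmx, elt_eq p h (eshift g y)).

Definition phi (N p a : nat) : elt :=
  match a with
  | O => Some (fun _ => 0)
  | S _ => Some (fun x => Rmax (- INR a * (x - 1))
                                (INR (Nat.div (N - a) p) * (x - INR p)))
  end.

Definition sigma_map (N p : nat) (xs : nat -> Rmx) : elt :=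
  fold_right ejoin None (map (fun a => eshift (phi N p a) (xs a)) (seq 0 (N - p + 1))).

From Stdlib Require Import Reals ZArith Znumtheory List Lra Lia.
From Coquelicot Require Import Coquelicot.
Open Scope R_scope.

(* Elements of E_{N,p} are convex, hence upper envelopes of their supporting lines.  A
   supporting line of integral slope m touching f inside (1, p) can be completed to a shifted
   phi_a lying between the line and f, the end-slope bound -f'(1) + p f'(p) <= N providing room
   for the other piece: a = -m if m < 0, a = N - p m (so that b = m) if m > 0, a = 0 if m = 0.
   Taking for each a the largest shift of phi_a below f therefore gives sigma((x_a)) = f.
   Conversely phi_a is rigid: an element below phi_a touching it inside its left piece agrees
   with it there, so its slope at 1 is -a; the slope bound then caps its slope at p by b, while
   lying below phi_a forces it to be at least b, so it agrees with phi_a on the right piece too.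
   Hence every phi_a is extremal, and an extremal element, being a finite max of shifted
   phi_a's, is a shift of one of them. *)

(* [pw_affine_int] with the subdivision organised as a binary tree, which suits induction. *)
Inductive pw_aff : R -> R -> (R -> R) -> Prop :=
| pw_aff_piece u v f (s : Z) c :
    u < v -> (forall x, u <= x <= v -> f x = IZR s * x + c) -> pw_aff u v f
| pw_aff_cat u w v f : pw_aff u w f -> pw_aff w v f -> pw_aff u v f.

Lemma pw_aff_lt u v f : pw_aff u v f -> u < v.
Proof. induction 1; lra. Qed.

Lemma pw_aff_restrict u v f u' v' :
  pw_aff u v f -> u <= u' -> u' < v' -> v' <= v -> pw_aff u' v' f.
Proof.
  intros H; revert u' v'.
  induction H as [u v f s c Huv Hf | u w v f H1 IH1 H2 IH2]; intros u' v' Hu Huv' Hv.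
  - apply pw_aff_piece with s c; auto. intros; apply Hf; lra.
  - destruct (Rle_dec v' w). { apply IH1; lra. }
    destruct (Rle_dec w u'). { apply IH2; lra. }
    apply pw_aff_cat with w; [apply IH1 | apply IH2]; lra.
Qed.

Lemma pw_aff_ext u v f g :
  pw_aff u v f -> (forall x, u <= x <= v -> f x = g x) -> pw_aff u v g.
Proof.
  induction 1 as [u v f s c Huv Hf | u w v f H1 IH1 H2 IH2]; intros E.
  - apply pw_aff_piece with s c; auto. intros; rewrite <- E; auto.
  - pose proof (pw_aff_lt _ _ _ H1); pose proof (pw_aff_lt _ _ _ H2).
    apply pw_aff_cat with w; [apply IH1 | apply IH2]; intros; apply E; lra.
Qed.

Lemma pw_aff_shift u v f k : pw_aff u v f -> pw_aff u v (fun x => f x + k).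
Proof.
  induction 1 as [u v f s c Huv Hf | u w v f H1 IH1 H2 IH2].
  - apply pw_aff_piece with s (c + k); auto. intros; rewrite Hf; auto; ring.
  - apply pw_aff_cat with w; auto.
Qed.

Lemma pw_aff_max_ge u v f g (s : Z) c : u < v ->
  (forall x, u <= x <= v -> f x = IZR s * x + c) ->
  (forall x, u <= x <= v -> g x <= f x) -> pw_aff u v (fun x => Rmax (f x) (g x)).
Proof.
  intros Huv Hf Hgf. apply pw_aff_piece with s c; auto.
  intros x Hx. rewrite Rmax_left by (apply Hgf; lra). auto.
Qed.

(* The difference of two affine pieces changes sign at most once, at its root. *)
Lemma pw_aff_max_affine u v f g (s1 s2 : Z) c1 c2 : u < v ->
  (forall x, u <= x <= v -> f x = IZR s1 * x + c1) ->
  (forall x, u <= x <= v -> g x = IZR s2 * x + c2) ->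
  pw_aff u v (fun x => Rmax (f x) (g x)).
Proof.
  intros Huv Hf Hg.
  set (a := IZR s1 - IZR s2); set (b := c1 - c2).
  assert (Hd : forall x, u <= x <= v -> f x - g x = a * x + b).
  { intros x Hx; rewrite Hf, Hg by auto; unfold a, b; ring. }
  assert (Ge : forall u' v', u <= u' -> u' < v' -> v' <= v -> 0 <= a * u' + b -> 0 <= a * v' + b ->
            pw_aff u' v' (fun x => Rmax (f x) (g x))).
  { intros u' v' ? ? ? Hu' Hv'. apply pw_aff_max_ge with s1 c1; auto.
    - intros; apply Hf; lra.
    - intros x Hx. assert (0 <= a * x + b) by (destruct (Rle_dec 0 a); nra).
      rewrite <- Hd in * by lra. lra. }
  assert (Le : forall u' v', u <= u' -> u' < v' -> v' <= v -> a * u' + b <= 0 -> a * v' + b <= 0 ->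
            pw_aff u' v' (fun x => Rmax (f x) (g x))).
  { intros u' v' ? ? ? Hu' Hv'. apply (pw_aff_ext u' v' (fun x => Rmax (g x) (f x)));
      [| intros; apply Rmax_comm].
    apply pw_aff_max_ge with s2 c2; auto.
    - intros; apply Hg; lra.
    - intros x Hx. assert (a * x + b <= 0) by (destruct (Rle_dec 0 a); nra).
      rewrite <- Hd in * by lra. lra. }
  destruct (Rle_dec 0 (a * u + b)) as [Du|Du], (Rle_dec 0 (a * v + b)) as [Dv|Dv].
  - apply Ge; lra.
  - destruct (Req_dec (a * u + b) 0). { apply Le; lra. }
    assert (a < 0) by nra.
    set (r := - b / a). assert (Hr : a * r + b = 0) by (unfold r; field; lra).
    assert (u < r) by (destruct (Rle_dec r u); [nra | lra]).
    assert (r < v) by (destruct (Rle_dec v r); [nra | lra]).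
    apply pw_aff_cat with r; [apply Ge | apply Le]; lra.
  - destruct (Req_dec (a * v + b) 0). { apply Le; lra. }
    assert (0 < a) by nra.
    set (r := - b / a). assert (Hr : a * r + b = 0) by (unfold r; field; lra).
    assert (u < r) by (destruct (Rle_dec r u); [nra | lra]).
    assert (r < v) by (destruct (Rle_dec v r); [nra | lra]).
    apply pw_aff_cat with r; [apply Le | apply Ge]; lra.
  - apply Le; lra.
Qed.

Lemma pw_aff_max u v f g :
  pw_aff u v f -> pw_aff u v g -> pw_aff u v (fun x => Rmax (f x) (g x)).
Proof.
  intros Hf; revert g.
  induction Hf as [u v f s c Huv Hf | u w v f H1 IH1 H2 IH2]; intros g Hg.
  - clear Huv; revert Hf. induction Hg as [u v g s' c' Huv' Hg | u w v g H1 IH1 H2 IH2]; intros Hf.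
    + eapply pw_aff_max_affine; eauto.
    + pose proof (pw_aff_lt _ _ _ H1); pose proof (pw_aff_lt _ _ _ H2).
      apply pw_aff_cat with w; [apply IH1 | apply IH2]; intros; apply Hf; lra.
  - pose proof (pw_aff_lt _ _ _ H1); pose proof (pw_aff_lt _ _ _ H2).
    apply pw_aff_cat with w; [apply IH1 | apply IH2]; eapply pw_aff_restrict; eauto; lra.
Qed.

Lemma pw_affine_int_pw_aff u v f : u < v -> pw_affine_int u v f -> pw_aff u v f.
Proof.
  intros Huv [n [t [s [c [Ht0 [Htn [Hmono Hf]]]]]]].
  assert (Hprefix : forall k, (1 <= k <= n)%nat -> pw_aff (t 0%nat) (t k) f).
  { induction k as [|k IH]; intros Hk; [lia|].
    assert (Hpiece : pw_aff (t k) (t (S k)) f).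
    { apply pw_aff_piece with (s k) (c k); [apply Hmono; lia | intros; apply Hf; auto; lia]. }
    destruct k as [|k]; [exact Hpiece|].
    apply pw_aff_cat with (t (S k)); [apply IH; lia | exact Hpiece]. }
  assert (n <> 0%nat) by (intro; subst; lra).
  rewrite <- Ht0, <- Htn. apply Hprefix; lia.
Qed.

Lemma pw_aff_pw_affine_int u v f : pw_aff u v f -> pw_affine_int u v f.
Proof.
  induction 1 as [u v f s0 c0 Huv Hf | u w v f H1 IH1 H2 IH2].
  - exists 1%nat, (fun i => if (i =? 0)%nat then u else v), (fun _ => s0), (fun _ => c0).
    repeat split; auto; intros i; [intros Hi | intros x Hi]; replace i with 0%nat by lia; auto.
  - destruct IH1 as [n1 [t1 [s1 [c1 [A0 [An [Am Ap]]]]]]].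
    destruct IH2 as [n2 [t2 [s2 [c2 [B0 [Bn [Bm Bp]]]]]]].
    exists (n1 + n2)%nat, (fun i => if (i <=? n1)%nat then t1 i else t2 (i - n1)%nat),
      (fun i => if (i <? n1)%nat then s1 i else s2 (i - n1)%nat),
      (fun i => if (i <? n1)%nat then c1 i else c2 (i - n1)%nat).
    (* the junction point [t1 n1 = w = t2 0] is listed once *)
    assert (E : forall i, (n1 <= i)%nat ->
              (if (i <=? n1)%nat then t1 i else t2 (i - n1)%nat) = t2 (i - n1)%nat).
    { intros i Hi. destruct (Nat.leb_spec i n1); auto.
      replace i with n1 by lia. rewrite Nat.sub_diag. congruence. }
    split; [|split; [|split]].
    + auto.
    + rewrite E by lia. replace (n1 + n2 - n1)%nat with n2 by lia. auto.
    + intros i Hi. destruct (Nat.ltb_spec (S i) (S n1)).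
      * rewrite (proj2 (Nat.leb_le i n1)), (proj2 (Nat.leb_le (S i) n1)) by lia. apply Am; lia.
      * rewrite !E by lia. replace (S i - n1)%nat with (S (i - n1)) by lia. apply Bm; lia.
    + intros i x Hi Hx. destruct (Nat.ltb_spec i n1).
      * rewrite (proj2 (Nat.leb_le i n1)), (proj2 (Nat.leb_le (S i) n1)) in Hx by lia. auto.
      * rewrite !E in Hx by lia. replace (S i - n1)%nat with (S (i - n1)) in Hx by lia.
        apply Bp; [lia | auto].
Qed.

Lemma pw_aff_lipschitz u v f : pw_aff u v f -> exists K, 0 <= K /\
  forall x y, u <= x -> x <= y -> y <= v -> Rabs (f y - f x) <= K * (y - x).
Proof.
  induction 1 as [u v f s c Huv Hf | u w v f H1 IH1 H2 IH2].
  - exists (Rabs (IZR s)). split; [apply Rabs_pos|]. intros x y ? ? ?.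
    rewrite !Hf by lra. replace (IZR s * y + c - (IZR s * x + c)) with (IZR s * (y - x)) by ring.
    rewrite Rabs_mult, (Rabs_right (y - x)) by lra. lra.
  - destruct IH1 as [K1 [HK1 P1]], IH2 as [K2 [HK2 P2]].
    pose proof (pw_aff_lt _ _ _ H1); pose proof (pw_aff_lt _ _ _ H2).
    pose proof (Rmax_l K1 K2); pose proof (Rmax_r K1 K2).
    exists (Rmax K1 K2). split; [lra|]. intros x y Hx Hxy Hy.
    destruct (Rle_dec y w); [specialize (P1 x y Hx Hxy ltac:(lra)); nra|].
    destruct (Rle_dec w x); [specialize (P2 x y ltac:(lra) Hxy Hy); nra|].
    specialize (P1 x w Hx ltac:(lra) ltac:(lra)). specialize (P2 w y ltac:(lra) ltac:(lra) Hy).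
    replace (f y - f x) with ((f y - f w) + (f w - f x)) by ring.
    eapply Rle_trans; [apply Rabs_triang | nra].
Qed.

Lemma lipschitz_cont_on a b f K : 0 <= K ->
  (forall x y, a <= x -> x <= y -> y <= b -> Rabs (f y - f x) <= K * (y - x)) ->
  cont_on a b f.
Proof.
  intros HK Hlip x Hx. apply filterlim_locally. intros eps.
  pose proof (cond_pos eps).
  assert (Hd : 0 < eps / (K + 1)) by (apply Rdiv_lt_0_compat; lra).
  exists (mkposreal _ Hd). intros y Hy Dy.
  change (Rabs (y - x) < eps / (K + 1)) in Hy. change (Rabs (f y - f x) < eps).
  assert (Rabs (f y - f x) <= K * Rabs (y - x)).
  { destruct (Rle_dec x y).
    - rewrite (Rabs_right (y - x)) by lra. apply Hlip; lra.
    - rewrite Rabs_minus_sym, (Rabs_minus_sym y), (Rabs_right (x - y)) by lra. apply Hlip; lra. }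
  assert (K * Rabs (y - x) <= K * (eps / (K + 1))) by (apply Rmult_le_compat_l; lra).
  assert (K * (eps / (K + 1)) < eps).
  { apply Rmult_lt_reg_r with (K + 1); [lra|]. field_simplify; lra. }
  lra.
Qed.

Lemma pw_aff_cont_on u v f : pw_aff u v f -> cont_on u v f.
Proof.
  intros Hf. destruct (pw_aff_lipschitz _ _ _ Hf) as [K [HK Hlip]].
  exact (lipschitz_cont_on _ _ _ _ HK Hlip).
Qed.

Lemma pw_aff_affine_near u v f y : pw_aff u v f -> u <= y <= v ->
  exists (s : Z) al be, u <= al < be /\ be <= v /\ al <= y <= be /\
    forall x, al <= x <= be -> f x = f y + IZR s * (x - y).
Proof.
  intros H; revert y.
  induction H as [u v f s c Huv Hf | u w v f H1 IH1 H2 IH2]; intros y Hy.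
  - exists s, u, v. repeat split; try lra. intros x Hx. rewrite !Hf by lra. ring.
  - pose proof (pw_aff_lt _ _ _ H1); pose proof (pw_aff_lt _ _ _ H2).
    destruct (Rle_dec y w);
      [destruct (IH1 y) as [s [al [be Hs]]] | destruct (IH2 y) as [s [al [be Hs]]]];
      try lra; exists s, al, be; intuition lra.
Qed.

Definition affine_right (f : R -> R) (u s : R) : Prop :=
  exists d, 0 < d /\ forall x, u <= x <= u + d -> f x = f u + s * (x - u).

Definition affine_left (f : R -> R) (v s : R) : Prop :=
  exists d, 0 < d /\ forall x, v - d <= x <= v -> f x = f v + s * (x - v).

Lemma pw_aff_affine_right u v f : pw_aff u v f -> exists s : Z, affine_right f u (IZR s).
Proof.
  intros Hf. pose proof (pw_aff_lt _ _ _ Hf).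
  destruct (pw_aff_affine_near u v f u Hf) as [s [al [be [? [? [? Hs]]]]]]; [lra|].
  exists s, (be - u). split; [lra|]. intros; apply Hs; lra.
Qed.

Lemma pw_aff_affine_left u v f : pw_aff u v f -> exists s : Z, affine_left f v (IZR s).
Proof.
  intros Hf. pose proof (pw_aff_lt _ _ _ Hf).
  destruct (pw_aff_affine_near u v f v Hf) as [s [al [be [? [? [? Hs]]]]]]; [lra|].
  exists s, (v - al). split; [lra|]. intros; apply Hs; lra.
Qed.

Lemma affine_right_shift f u s k : affine_right f u s -> affine_right (fun x => f x + k) u s.
Proof. intros [d [Hd Hf]]. exists d. split; auto. intros; rewrite Hf; auto; ring. Qed.

Lemma affine_left_shift f v s k : affine_left f v s -> affine_left (fun x => f x + k) v s.
Proof. intros [d [Hd Hf]]. exists d. split; auto. intros; rewrite Hf; auto; ring. Qed.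

Lemma affine_right_le f g u s t e : 0 < e -> affine_right f u s -> affine_right g u t ->
  f u = g u -> (forall x, u <= x <= u + e -> f x <= g x) -> s <= t.
Proof.
  intros He [d1 [Hd1 Hf]] [d2 [Hd2 Hg]] Hu Hle.
  assert (Hh : exists h, 0 < h /\ h <= e /\ h <= d1 /\ h <= d2).
  { exists (Rmin e (Rmin d1 d2)).
    pose proof (Rmin_l e (Rmin d1 d2)); pose proof (Rmin_r e (Rmin d1 d2)).
    pose proof (Rmin_l d1 d2); pose proof (Rmin_r d1 d2).
    split; [apply Rmin_glb_lt; [|apply Rmin_glb_lt]; auto | lra]. }
  destruct Hh as [h [? [? [? ?]]]].
  assert (Q := Hle (u + h) ltac:(lra)).
  rewrite Hf, Hg, Hu in Q by lra. nra.
Qed.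

Lemma affine_left_le f g v s t e : 0 < e -> affine_left f v s -> affine_left g v t ->
  f v = g v -> (forall x, v - e <= x <= v -> f x <= g x) -> t <= s.
Proof.
  intros He [d1 [Hd1 Hf]] [d2 [Hd2 Hg]] Hv Hle.
  assert (Hh : exists h, 0 < h /\ h <= e /\ h <= d1 /\ h <= d2).
  { exists (Rmin e (Rmin d1 d2)).
    pose proof (Rmin_l e (Rmin d1 d2)); pose proof (Rmin_r e (Rmin d1 d2)).
    pose proof (Rmin_l d1 d2); pose proof (Rmin_r d1 d2).
    split; [apply Rmin_glb_lt; [|apply Rmin_glb_lt]; auto | lra]. }
  destruct Hh as [h [? [? [? ?]]]].
  assert (Q := Hle (v - h) ltac:(lra)).
  rewrite Hf, Hg, Hv in Q by lra. nra.
Qed.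

Lemma affine_right_right_deriv f u s : affine_right f u s -> right_deriv f u s.
Proof.
  intros [d [Hd Hf]].
  apply filterlim_ext_loc with (fun _ => s); [|apply filterlim_const].
  exists (mkposreal _ Hd). intros h Hh Hpos.
  change (Rabs (h - 0) < d) in Hh. rewrite Rminus_0_r in Hh. apply Rabs_def2 in Hh.
  rewrite Hf by lra. field. lra.
Qed.

Lemma affine_left_left_deriv f v s : affine_left f v s -> left_deriv f v s.
Proof.
  intros [d [Hd Hf]].
  apply filterlim_ext_loc with (fun _ => s); [|apply filterlim_const].
  exists (mkposreal _ Hd). intros h Hh Hneg.
  change (Rabs (h - 0) < d) in Hh. rewrite Rminus_0_r in Hh. apply Rabs_def2 in Hh.
  rewrite Hf by lra. field. lra.
Qed.

Lemma right_deriv_unique f u d1 d2 : right_deriv f u d1 -> right_deriv f u d2 -> d1 = d2.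
Proof.
  intros H1 H2. eapply (@filterlim_locally_unique _ R_AbsRing R_NormedModule); eauto.
  apply Proper_StrongProper, at_right_proper_filter.
Qed.

Lemma left_deriv_unique f v d1 d2 : left_deriv f v d1 -> left_deriv f v d2 -> d1 = d2.
Proof.
  intros H1 H2. eapply (@filterlim_locally_unique _ R_AbsRing R_NormedModule); eauto.
  apply Proper_StrongProper, at_left_proper_filter.
Qed.

Lemma convex_on_max a b f g :
  convex_on a b f -> convex_on a b g -> convex_on a b (fun x => Rmax (f x) (g x)).
Proof.
  intros Hf Hg x y l Hx Hy Hl.
  specialize (Hf x y l Hx Hy Hl). specialize (Hg x y l Hx Hy Hl).
  pose proof (Rmax_l (f x) (g x)); pose proof (Rmax_r (f x) (g x)).
  pose proof (Rmax_l (f y) (g y)); pose proof (Rmax_r (f y) (g y)).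
  apply Rmax_lub; nra.
Qed.

Lemma convex_on_shift a b f k : convex_on a b f -> convex_on a b (fun x => f x + k).
Proof. intros Hf x y l Hx Hy Hl. specialize (Hf x y l Hx Hy Hl). nra. Qed.

Lemma support_slope_le a b f x1 x2 m1 m2 : a <= x1 < x2 -> x2 <= b ->
  (forall w, a <= w <= b -> f x1 + m1 * (w - x1) <= f w) ->
  (forall w, a <= w <= b -> f x2 + m2 * (w - x2) <= f w) -> m1 <= m2.
Proof.
  intros Hx1 Hx2 S1 S2.
  specialize (S1 x2 ltac:(lra)). specialize (S2 x1 ltac:(lra)). nra.
Qed.

Section Convex.
Variables (a b : R) (f : R -> R).
Hypothesis Hconv : convex_on a b f.

Lemma convex_chord u z v : a <= u -> u < z -> z < v -> v <= b ->
  (v - u) * f z <= (v - z) * f u + (z - u) * f v.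
Proof.
  intros Hu Huz Hzv Hv. set (l := (v - z) / (v - u)).
  assert (Hl : 0 < l < 1).
  { unfold l; split; [apply Rdiv_lt_0_compat; lra|].
    apply Rmult_lt_reg_r with (v - u); [lra|]. field_simplify; lra. }
  assert (Hz : l * u + (1 - l) * v = z) by (unfold l; field; lra).
  assert (Hconv_z := Hconv u v l ltac:(lra) ltac:(lra) ltac:(lra)). rewrite Hz in Hconv_z.
  assert (Hl' : (v - u) * l = v - z) by (unfold l; field; lra).
  nra.
Qed.

Lemma convex_chord_sub_line c m u z v : a <= u -> u < z -> z < v -> v <= b ->
  (v - u) * (f z - (c + m * z)) <= (v - z) * (f u - (c + m * u)) + (z - u) * (f v - (c + m * v)).
Proof.
  intros. pose proof (convex_chord u z v).
  assert ((v - u) * (c + m * z) = (v - z) * (c + m * u) + (z - u) * (c + m * v)) by ring.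
  lra.
Qed.

Lemma convex_support_line c m al be : a <= al -> al < be -> be <= b ->
  (forall x, al <= x <= be -> f x = c + m * x) -> forall z, a <= z <= b -> c + m * z <= f z.
Proof.
  intros Hal Halbe Hbe Hline z Hz.
  assert (Hal0 : f al - (c + m * al) = 0) by (rewrite Hline by lra; ring).
  assert (Hbe0 : f be - (c + m * be) = 0) by (rewrite Hline by lra; ring).
  destruct (Rlt_dec z al).
  - pose proof (convex_chord_sub_line c m z al be). nra.
  - destruct (Rle_dec z be); [rewrite Hline by lra; lra|].
    pose proof (convex_chord_sub_line c m al be z). nra.
Qed.

Lemma convex_le_line_touch c m u z v : a <= u -> u < z -> z < v -> v <= b ->
  (forall x, u <= x <= v -> f x <= c + m * x) -> f z = c + m * z ->
  forall x, u <= x <= v -> f x = c + m * x.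
Proof.
  intros Hu Huz Hzv Hv Hle Hz x Hx. apply Rle_antisym; [apply Hle; auto|].
  pose proof (Hle u ltac:(lra)); pose proof (Hle v ltac:(lra)).
  destruct (Rtotal_order x z) as [Hxz|[Hxz|Hxz]]; [| subst; lra |].
  - pose proof (convex_chord_sub_line c m x z v). nra.
  - pose proof (convex_chord_sub_line c m u z x). nra.
Qed.
End Convex.

Lemma convex_support_affine_right a b f s : convex_on a b f -> a < b -> affine_right f a s ->
  forall w, a <= w <= b -> f a + s * (w - a) <= f w.
Proof.
  intros Hconv Hab [d [Hd Hf]] w Hw.
  pose proof (Rmin_l d (b - a)); pose proof (Rmin_r d (b - a)).
  assert (0 < Rmin d (b - a)) by (apply Rmin_glb_lt; lra).
  replace (f a + s * (w - a)) with ((f a - s * a) + s * w) by ring.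
  apply (convex_support_line a b f Hconv _ _ a (a + Rmin d (b - a))); try lra.
  intros x Hx. rewrite Hf by lra. ring.
Qed.

Lemma convex_support_affine_left a b f s : convex_on a b f -> a < b -> affine_left f b s ->
  forall w, a <= w <= b -> f b + s * (w - b) <= f w.
Proof.
  intros Hconv Hab [d [Hd Hf]] w Hw.
  pose proof (Rmin_l d (b - a)); pose proof (Rmin_r d (b - a)).
  assert (0 < Rmin d (b - a)) by (apply Rmin_glb_lt; lra).
  replace (f b + s * (w - b)) with ((f b - s * b) + s * w) by ring.
  apply (convex_support_line a b f Hconv _ _ (b - Rmin d (b - a)) b); try lra.
  intros x Hx. rewrite Hf by lra. ring.
Qed.

Definition slope_bounded (N p : nat) (g : R -> R) : Prop :=
  exists s1 s2 : Z, affine_right g 1 (IZR s1) /\ affine_left g (INR p) (IZR s2) /\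
    - IZR s1 + INR p * IZR s2 <= INR N.

Definition admissible (N p : nat) (g : R -> R) : Prop :=
  convex_on 1 (INR p) g /\ pw_aff 1 (INR p) g /\ g 1 = g (INR p) /\ slope_bounded N p g.

Lemma in_E_admissible N p g : 1 < INR p -> in_E N p (Some g) <-> admissible N p g.
Proof.
  intros Hp. split.
  - intros [_ [Hconv [Hpw [Hends [dl [dr [Hdl [Hdr Hbound]]]]]]]].
    apply pw_affine_int_pw_aff in Hpw; auto.
    destruct (pw_aff_affine_right _ _ _ Hpw) as [s1 Hs1].
    destruct (pw_aff_affine_left _ _ _ Hpw) as [s2 Hs2].
    repeat split; auto. exists s1, s2. repeat split; auto.
    rewrite <- (right_deriv_unique _ _ _ _ Hdl (affine_right_right_deriv _ _ _ Hs1)).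
    rewrite <- (left_deriv_unique _ _ _ _ Hdr (affine_left_left_deriv _ _ _ Hs2)).
    auto.
  - intros [Hconv [Hpw [Hends [s1 [s2 [Hs1 [Hs2 Hbound]]]]]]].
    repeat split; auto using pw_aff_cont_on, pw_aff_pw_affine_int.
    exists (IZR s1), (IZR s2).
    auto using affine_right_right_deriv, affine_left_left_deriv.
Qed.

Lemma slope_bounded_above N p f h : pw_aff 1 (INR p) h -> slope_bounded N p f ->
  (forall x, 1 <= x <= INR p -> f x <= h x) -> h 1 = f 1 -> h (INR p) = f (INR p) ->
  slope_bounded N p h.
Proof.
  intros Hh [s1 [s2 [Hs1 [Hs2 Hbound]]]] Hle H1 Hp.
  pose proof (pw_aff_lt _ _ _ Hh).
  destruct (pw_aff_affine_right _ _ _ Hh) as [t1 Ht1].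
  destruct (pw_aff_affine_left _ _ _ Hh) as [t2 Ht2].
  exists t1, t2. repeat split; auto.
  assert (IZR s1 <= IZR t1)
    by (apply (affine_right_le f h 1 _ _ (INR p - 1)); auto; [lra | intros; apply Hle; lra]).
  assert (IZR t2 <= IZR s2)
    by (apply (affine_left_le f h (INR p) _ _ (INR p - 1)); auto; [lra | intros; apply Hle; lra]).
  nra.
Qed.

Lemma admissible_shift N p g k : admissible N p g -> admissible N p (fun x => g x + k).
Proof.
  intros [Hconv [Hpw [Hends [s1 [s2 [Hs1 [Hs2 Hbound]]]]]]].
  repeat split; auto using convex_on_shift, pw_aff_shift.
  - rewrite Hends. auto.
  - exists s1, s2. auto using affine_right_shift, affine_left_shift.
Qed.

(* The max agrees at both ends with whichever of [f], [g] is larger there (the same one,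
   since [f 1 = f p] and [g 1 = g p]). *)
Lemma admissible_max N p f g :
  admissible N p f -> admissible N p g -> admissible N p (fun x => Rmax (f x) (g x)).
Proof.
  intros Hf Hg.
  destruct Hf as [Hcf [Hpf [Hef Hsf]]], Hg as [Hcg [Hpg [Heg Hsg]]].
  assert (Hpw := pw_aff_max _ _ _ _ Hpf Hpg).
  repeat split; auto using convex_on_max.
  - rewrite Hef, Heg. auto.
  - destruct (Rle_dec (g 1) (f 1)).
    + apply (slope_bounded_above N p f); auto; [intros; apply Rmax_l | |];
        apply Rmax_left; lra.
    + apply (slope_bounded_above N p g); auto; [intros; apply Rmax_r | |];
        apply Rmax_right; lra.
Qed.

Lemma in_E_shift N p F x : 1 < INR p -> in_E N p F -> in_E N p (eshift F x).
Proof.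
  intros Hp HF. destruct F as [f|], x as [c|]; simpl; auto.
  apply in_E_admissible, admissible_shift, in_E_admissible; auto.
Qed.

Lemma in_E_join N p F G : 1 < INR p -> in_E N p F -> in_E N p G -> in_E N p (ejoin F G).
Proof.
  intros Hp HF HG. destruct F as [f|], G as [g|]; simpl; auto.
  apply in_E_admissible; auto. apply admissible_max; apply in_E_admissible; auto.
Qed.

Lemma in_E_fold_join N p l : 1 < INR p -> (forall F, In F l -> in_E N p F) ->
  in_E N p (fold_right ejoin None l).
Proof.
  intros Hp. induction l as [|F l IH]; intros Hl; simpl; auto.
  apply in_E_join; auto using in_eq, in_cons.
Qed.

Lemma IZR_le_div_of_bound N p a (s : Z) : (0 < p)%nat -> (a <= N)%nat ->
  INR a + INR p * IZR s <= INR N -> IZR s <= INR ((N - a) / p).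
Proof.
  intros Hp HaN H. rewrite !INR_IZR_INZ, <- mult_IZR, <- plus_IZR in H. apply le_IZR in H.
  rewrite INR_IZR_INZ, Nat2Z.inj_div, Nat2Z.inj_sub by auto. apply IZR_le.
  apply Z.div_le_lower_bound; lia.
Qed.

Definition phif (N p a : nat) : R -> R :=
  match a with
  | O => fun _ => 0
  | S _ => fun z => Rmax (- INR a * (z - 1)) (INR ((N - a) / p) * (z - INR p))
  end.

Lemma phi_Some N p a : phi N p a = Some (phif N p a).
Proof. destruct a; reflexivity. Qed.

Lemma phif_nonpos N p a z : 1 <= z <= INR p -> phif N p a z <= 0.
Proof.
  intros Hz. destruct a as [|a']; unfold phif; [lra|].
  pose proof (pos_INR (S a')); pose proof (pos_INR ((N - S a') / p)).
  apply Rmax_lub; nra.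
Qed.

Lemma phif_pos N p a z : (1 <= a)%nat ->
  phif N p a z = Rmax (- INR a * (z - 1)) (INR ((N - a) / p) * (z - INR p)).
Proof. destruct a; [lia | reflexivity]. Qed.

Section PhiPositive.
Variables (N p a : nat).
Hypotheses (Hp : (2 <= p)%nat) (Ha : (1 <= a)%nat) (HaN : (a <= N - p)%nat).

Let b := ((N - a) / p)%nat.

(* the kink of [phif N p a], where [- a (z - 1) = b (z - p)] *)
Let x0 := (INR a + INR b * INR p) / (INR a + INR b).

Lemma phi_slopes : (1 <= b)%nat /\ (a + p * b <= N)%nat.
Proof.
  split; [apply Nat.div_str_pos; lia|].
  assert (p * b <= N - a)%nat by apply Nat.Div0.mul_div_le. lia.
Qed.

Lemma phi_kink_bounds : 1 < x0 < INR p.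
Proof.
  destruct phi_slopes as [Hb _].
  assert (1 <= INR a) by (apply (le_INR 1); auto).
  assert (1 <= INR b) by (apply (le_INR 1); auto).
  assert (1 < INR p) by (apply lt_1_INR; lia).
  assert (Hx0 : x0 * (INR a + INR b) = INR a + INR b * INR p) by (unfold x0; field; lra).
  split; nra.
Qed.

Lemma phif_left z : z <= x0 -> phif N p a z = INR a + - INR a * z.
Proof.
  intros Hz. rewrite phif_pos by auto. fold b. destruct phi_slopes as [Hb _].
  assert (1 <= INR a) by (apply (le_INR 1); auto).
  assert (1 <= INR b) by (apply (le_INR 1); auto).
  assert (Hx0 : x0 * (INR a + INR b) = INR a + INR b * INR p) by (unfold x0; field; lra).
  rewrite Rmax_left; [ring | nra].
Qed.

Lemma phif_right z : x0 <= z -> phif N p a z = - INR b * INR p + INR b * z.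
Proof.
  intros Hz. rewrite phif_pos by auto. fold b. destruct phi_slopes as [Hb _].
  assert (1 <= INR a) by (apply (le_INR 1); auto).
  assert (1 <= INR b) by (apply (le_INR 1); auto).
  assert (Hx0 : x0 * (INR a + INR b) = INR a + INR b * INR p) by (unfold x0; field; lra).
  rewrite Rmax_right; [ring | nra].
Qed.

Lemma admissible_phif_pos : admissible N p (phif N p a).
Proof.
  destruct phi_slopes as [Hb Hab]. destruct phi_kink_bounds as [Hx01 Hx0p].
  assert (Hab' : INR a + INR p * INR b <= INR N)
    by (rewrite <- mult_INR, <- plus_INR; apply le_INR; auto).
  split; [|split; [|split]].
  - intros x y l Hx Hy Hl. rewrite !phif_pos by auto.
    apply (convex_on_max 1 (INR p) (fun z => - INR a * (z - 1)) (fun z => INR b * (z - INR p)));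
      auto; intros ? ? ? _ _ _; right; ring.
  - apply (pw_aff_ext 1 (INR p) (fun z => Rmax (- INR a * (z - 1)) (INR b * (z - INR p))));
      [| intros; symmetry; apply phif_pos; auto].
    apply pw_aff_max_affine with (- Z.of_nat a)%Z (Z.of_nat b) (INR a) (- INR b * INR p);
      [lra | intros; rewrite opp_IZR, <- INR_IZR_INZ; ring | intros; rewrite <- INR_IZR_INZ; ring].
  - rewrite phif_left, phif_right by lra. ring.
  - exists (- Z.of_nat a)%Z, (Z.of_nat b). rewrite opp_IZR, <- !INR_IZR_INZ.
    split; [|split]; [exists (x0 - 1) | exists (INR p - x0) | lra]; split; try lra;
      intros x Hx; [rewrite !phif_left by lra | rewrite !phif_right by lra]; ring.
Qed.

Lemma admissible_le_phif_right g : admissible N p g ->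
  (forall x, 1 <= x <= INR p -> g x <= phif N p a x) ->
  (forall x, 1 <= x <= x0 -> g x = phif N p a x) ->
  forall x, x0 <= x <= INR p -> g x = phif N p a x.
Proof.
  intros [Hconv [_ [Hends [s1 [s2 [Hs1 [Hs2 Hbound]]]]]]] Hle Hleft.
  destruct phi_kink_bounds as [Hx01 Hx0p].
  assert (Hs1a : IZR s1 = - INR a).
  { apply (right_deriv_unique g 1); [now apply affine_right_right_deriv|].
    apply affine_right_right_deriv. exists (x0 - 1). split; [lra|].
    intros x Hx. rewrite !Hleft, !phif_left by lra. ring. }
  assert (Hgp : g (INR p) = phif N p a (INR p)).
  { rewrite <- Hends, Hleft, phif_left, phif_right by lra. ring. }
  assert (Hs2b : IZR s2 = INR b).
  { apply Rle_antisym.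
    - apply IZR_le_div_of_bound; [lia | lia | lra].
    - apply (affine_left_le g (phif N p a) (INR p) _ _ (INR p - x0));
        [lra | auto | | auto | intros; apply Hle; lra].
      exists (INR p - x0). split; [lra|]. intros x Hx. rewrite !phif_right by lra. ring. }
  destruct Hs2 as [d [Hd Hg]].
  (* a point of [(x0, p)] where [g] already agrees with the right piece of [phif] *)
  set (w := INR p - Rmin d (INR p - x0) / 2).
  pose proof (Rmin_l d (INR p - x0)); pose proof (Rmin_r d (INR p - x0)).
  assert (0 < Rmin d (INR p - x0)) by (apply Rmin_glb_lt; lra).
  intros x Hx. rewrite phif_right by lra. revert x Hx.
  apply (convex_le_line_touch 1 (INR p) g Hconv _ _ x0 w (INR p)); try (unfold w; lra).
  - intros x Hx. rewrite <- phif_right by lra. apply Hle; lra.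
  - rewrite Hg, Hgp, Hs2b, phif_right by (unfold w; lra). ring.
Qed.

Lemma admissible_le_phif_pos_eq g : admissible N p g ->
  (forall x, 1 <= x <= INR p -> g x <= phif N p a x) ->
  g ((1 + x0) / 2) = phif N p a ((1 + x0) / 2) ->
  forall x, 1 <= x <= INR p -> g x = phif N p a x.
Proof.
  intros Hg Hle Hmid. destruct phi_kink_bounds as [Hx01 Hx0p].
  assert (Hleft : forall x, 1 <= x <= x0 -> g x = phif N p a x).
  { intros x Hx. rewrite phif_left by lra. revert x Hx.
    apply (convex_le_line_touch 1 (INR p) g (proj1 Hg) _ _ 1 ((1 + x0) / 2) x0); try lra.
    - intros x Hx. rewrite <- phif_left by lra. apply Hle; lra.
    - rewrite Hmid, phif_left by lra. ring. }
  intros x Hx. destruct (Rle_dec x x0).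
  - apply Hleft; lra.
  - apply admissible_le_phif_right; auto; lra.
Qed.
End PhiPositive.

Lemma admissible_phif N p a : (2 <= p)%nat -> (a <= N - p)%nat -> admissible N p (phif N p a).
Proof.
  intros Hp HaN. destruct (Nat.eq_dec a 0) as [->|Ha]; [|apply admissible_phif_pos; lia].
  assert (1 < INR p) by (apply lt_1_INR; lia).
  pose proof (pos_INR N).
  split; [|split; [|split]]; unfold phif.
  - intros ? ? ? _ _ _. lra.
  - apply pw_aff_piece with 0%Z 0; [lra | intros; ring].
  - reflexivity.
  - exists 0%Z, 0%Z. split; [|split]; [exists 1 | exists 1 | lra]; split; try lra; intros; ring.
Qed.

Lemma phif_rigid N p a : (2 <= p)%nat -> (a <= N - p)%nat ->
  exists z, 1 < z < INR p /\ forall g, admissible N p g ->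
    (forall x, 1 <= x <= INR p -> g x <= phif N p a x) -> g z = phif N p a z ->
    forall x, 1 <= x <= INR p -> g x = phif N p a x.
Proof.
  intros Hp HaN. assert (1 < INR p) by (apply lt_1_INR; lia).
  destruct (Nat.eq_dec a 0) as [->|Ha].
  - exists ((1 + INR p) / 2). split; [lra|]. intros g Hg Hle Hz x Hx.
    unfold phif in *. transitivity (0 + 0 * x); [|ring]. revert x Hx.
    apply (convex_le_line_touch 1 (INR p) g (proj1 Hg) 0 0 1 ((1 + INR p) / 2) (INR p));
      try lra. intros x Hx. specialize (Hle x Hx). lra.
  - pose proof (phi_kink_bounds N p a ltac:(lia) ltac:(lia) HaN).
    eexists. split; [|apply admissible_le_phif_pos_eq; lia]. lra.
Qed.

Lemma extremal_phi N p a : (2 <= p)%nat -> (a <= N - p)%nat -> extremal N p (phi N p a).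
Proof.
  intros Hp HaN. assert (1 < INR p) by (apply lt_1_INR; lia).
  rewrite phi_Some.
  split; [apply in_E_admissible, admissible_phif; auto|]. split; [discriminate|].
  intros [f1|] [f2|] H1 H2 Hjoin; simpl in Hjoin |- *; auto.
  apply in_E_admissible in H1, H2; auto.
  destruct (phif_rigid N p a) as [z [Hz Hrigid]]; auto.
  assert (Hjz := Hjoin z ltac:(unfold in_dom; lra)).
  assert (L1 : forall x, 1 <= x <= INR p -> f1 x <= phif N p a x)
    by (intros x Hx; rewrite <- Hjoin by (unfold in_dom; lra); apply Rmax_l).
  assert (L2 : forall x, 1 <= x <= INR p -> f2 x <= phif N p a x)
    by (intros x Hx; rewrite <- Hjoin by (unfold in_dom; lra); apply Rmax_r).
  unfold Rmax in Hjz. destruct (Rle_dec (f1 z) (f2 z)); [right | left]; intros x Hx; auto.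
Qed.

(* Basing the line at an interior point [t] of the affine piece through [y] keeps its
   touching point away from the ends 1 and p, where the end slopes are compared with it. *)
Lemma admissible_support_at N p g y : admissible N p g -> 1 <= y <= INR p ->
  exists (m : Z) t, 1 < t < INR p /\ g y = g t + IZR m * (y - t) /\
    forall w, 1 <= w <= INR p -> g t + IZR m * (w - t) <= g w.
Proof.
  intros [Hconv [Hpw _]] Hy.
  destruct (pw_aff_affine_near _ _ _ y Hpw Hy) as [m [al [be [Hal [Hbe [Hyab Hg]]]]]].
  exists m, ((al + be) / 2). split; [lra|].
  rewrite (Hg ((al + be) / 2)) by lra. split; [ring|].
  intros w Hw. replace (g y + IZR m * ((al + be) / 2 - y) + IZR m * (w - (al + be) / 2))
    with ((g y - IZR m * y) + IZR m * w) by ring.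
  apply (convex_support_line 1 (INR p) g Hconv _ _ al be); try lra.
  intros x Hx. rewrite Hg by lra. ring.
Qed.

Definition phif_between (N p : nat) (g l : R -> R) (a : nat) (c : R) : Prop :=
  (a <= N - p)%nat /\ forall w, 1 <= w <= INR p -> l w <= phif N p a w + c <= g w.

Section SupportLines.
Variables (N p : nat) (g : R -> R) (s1 s2 m : Z) (t : R).
Hypotheses (Hp : (2 <= p)%nat) (Hbound : - IZR s1 + INR p * IZR s2 <= INR N)
  (Hends : g 1 = g (INR p)) (Ht : 1 < t < INR p)
  (S1 : forall w, 1 <= w <= INR p -> g 1 + IZR s1 * (w - 1) <= g w)
  (S2 : forall w, 1 <= w <= INR p -> g (INR p) + IZR s2 * (w - INR p) <= g w)
  (St : forall w, 1 <= w <= INR p -> g t + IZR m * (w - t) <= g w).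

Let line w := g t + IZR m * (w - t).

Lemma support_slopes_ordered : IZR s1 <= IZR m <= IZR s2.
Proof.
  split; [apply (support_slope_le 1 (INR p) g 1 t) | apply (support_slope_le 1 (INR p) g t (INR p))];
    auto; lra.
Qed.

Lemma phif_between_neg : (m < 0)%Z -> exists a c, phif_between N p g line a c.
Proof.
  (* [a = -m]: the left piece of [phif N p a] is the line *)
  intros Hm. assert (Hm' : IZR m < 0) by (apply IZR_lt; auto).
  destruct support_slopes_ordered as [Hs1m Hms2].
  assert (0 < IZR s2).
  { specialize (St 1 ltac:(lra)). specialize (S2 t ltac:(lra)). nra. }
  assert (Hs2 : 1 <= IZR s2) by (apply IZR_le; apply lt_IZR in H; lia).
  set (a := Z.to_nat (- m)).
  assert (Ha : INR a = - IZR m) by (unfold a; rewrite INR_IZR_INZ, Z2Nat.id by lia; apply opp_IZR).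
  assert (Ha1 : (1 <= a)%nat) by (unfold a; lia).
  assert (HaN : (a + p <= N)%nat) by (apply INR_le; rewrite plus_INR; nra).
  assert (Hb := IZR_le_div_of_bound N p a s2 ltac:(lia) ltac:(lia) ltac:(nra)).
  exists a, (line 1). split; [lia|]. intros w Hw. rewrite phif_pos by auto.
  assert (Hfirst : - INR a * (w - 1) + line 1 = line w) by (unfold line; rewrite Ha; ring).
  assert (line 1 <= g (INR p)) by (rewrite <- Hends; apply St; lra).
  assert (INR ((N - a) / p) * (w - INR p) <= IZR s2 * (w - INR p)) by nra.
  specialize (St w Hw). specialize (S2 w Hw). fold (line w) in St.
  split; [rewrite <- Hfirst; apply Rplus_le_compat_r, Rmax_l |].
  apply Rmax_case_strong; intros; lra.
Qed.

Lemma phif_between_pos : (0 < m)%Z -> exists a c, phif_between N p g line a c.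
Proof.
  (* [a = N - p m], so that [b = m]: the right piece of [phif N p a] is the line *)
  intros Hm. assert (Hm' : 0 < IZR m) by (apply IZR_lt; auto).
  destruct support_slopes_ordered as [Hs1m Hms2].
  assert (IZR s1 < 0).
  { specialize (St (INR p) ltac:(lra)). specialize (S1 t ltac:(lra)). nra. }
  assert (Hs1 : IZR s1 <= -1) by (apply IZR_le; apply lt_IZR in H; lia).
  set (k := Z.to_nat m).
  assert (Hk : INR k = IZR m) by (unfold k; rewrite INR_IZR_INZ, Z2Nat.id by lia; auto).
  assert (Hpk : (p * k + 1 <= N)%nat).
  { apply INR_le. rewrite plus_INR, mult_INR, Hk. change (INR 1) with 1.
    pose proof (pos_INR p). nra. }
  set (a := (N - p * k)%nat).
  assert (Hdiv : ((N - a) / p)%nat = k).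
  { unfold a. replace (N - (N - p * k))%nat with (k * p)%nat by lia. apply Nat.div_mul. lia. }
  assert (Ha : INR a = INR N - INR p * IZR m) by (unfold a; rewrite minus_INR, mult_INR, Hk by lia; auto).
  exists a, (line (INR p)). split; [unfold a, k; nia|]. intros w Hw.
  rewrite phif_pos, Hdiv, Hk by (unfold a; lia).
  assert (Hsecond : IZR m * (w - INR p) + line (INR p) = line w) by (unfold line; ring).
  assert (line (INR p) <= g 1) by (rewrite Hends; apply St; lra).
  assert (- INR a <= IZR s1) by (rewrite Ha; pose proof (pos_INR p); nra).
  assert (- INR a * (w - 1) <= IZR s1 * (w - 1)) by (apply Rmult_le_compat_r; lra).
  specialize (St w Hw). specialize (S1 w Hw). fold (line w) in St.
  split; [rewrite <- Hsecond; apply Rplus_le_compat_r, Rmax_r |].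
  apply Rmax_case_strong; intros; lra.
Qed.

Lemma phif_between_line : exists a c, phif_between N p g line a c.
Proof.
  destruct (Z.lt_trichotomy m 0) as [Hm|[->|Hm]].
  - apply phif_between_neg; auto.
  - exists 0%nat, (g t). split; [lia|]. intros w Hw. specialize (St w Hw).
    unfold line, phif. lra.
  - apply phif_between_pos; auto.
Qed.
End SupportLines.

Lemma admissible_phif_support N p g y : (2 <= p)%nat -> admissible N p g -> 1 <= y <= INR p ->
  exists a c, (a <= N - p)%nat /\ (forall w, 1 <= w <= INR p -> phif N p a w + c <= g w) /\
    g y <= phif N p a y + c.
Proof.
  intros Hp Hg Hy. pose proof Hg as [Hconv [Hpw [Hends [s1 [s2 [Hs1 [Hs2 Hbound]]]]]]].
  pose proof (pw_aff_lt _ _ _ Hpw) as Hp1.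
  assert (S1 := convex_support_affine_right _ _ _ _ Hconv Hp1 Hs1).
  assert (S2 := convex_support_affine_left _ _ _ _ Hconv Hp1 Hs2).
  destruct (admissible_support_at N p g y Hg Hy) as [m [t [Ht [Hgy St]]]].
  destruct (phif_between_line N p g s1 s2 m t Hp Hbound Hends Ht S1 S2 St)
    as [a [c [HaN Hbetween]]].
  exists a, c. split; [auto|]. split; [intros; apply Hbetween; auto|].
  rewrite Hgy. apply Hbetween; auto.
Qed.

Lemma largest_shift_below u v (h g : R -> R) : u <= v ->
  (exists c0, forall w, u <= w <= v -> h w + c0 <= g w) ->
  { X : R | (forall w, u <= w <= v -> h w + X <= g w) /\
            forall c, (forall w, u <= w <= v -> h w + c <= g w) -> c <= X }.
Proof.
  intros Huv Hne.
  set (below := fun c => forall w, u <= w <= v -> h w + c <= g w).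
  assert (Hbound : bound below).
  { exists (g u - h u). intros c Hc. specialize (Hc u ltac:(lra)). lra. }
  destruct (completeness below Hbound Hne) as [X [Hub Hlub]].
  exists X. split; [|exact Hub].
  intros w Hw. enough (X <= g w - h w) by lra.
  apply Hlub. intros c Hc. specialize (Hc w Hw). lra.
Qed.

Lemma pw_aff_bounded_below u v g : pw_aff u v g -> exists K, forall w, u <= w <= v -> K <= g w.
Proof.
  intros Hg. pose proof (pw_aff_lt _ _ _ Hg).
  destruct (pw_aff_lipschitz _ _ _ Hg) as [L [HL Hlip]].
  exists (g u - L * (v - u)). intros w Hw.
  specialize (Hlip u w ltac:(lra) ltac:(lra) ltac:(lra)). apply Rabs_le_between in Hlip. nra.
Qed.

Lemma fold_ejoin_Some (F : nat -> R -> R) l : l <> nil ->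
  exists h, fold_right ejoin None (map (fun a => Some (F a)) l) = Some h /\
    (forall z a, In a l -> F a z <= h z) /\
    (forall z M, (forall a, In a l -> F a z <= M) -> h z <= M).
Proof.
  induction l as [|a l IH]; intros Hl; [congruence|].
  destruct l as [|a' l'].
  - exists (F a). split; [reflexivity|]. split.
    + intros z b [<-|[]]. lra.
    + intros z M HM. apply HM. left; auto.
  - destruct IH as [h [Eh [Hub Hlub]]]; [discriminate|].
    exists (fun z => Rmax (F a z) (h z)). split; [simpl in *; rewrite Eh; reflexivity|]. split.
    + intros z b [<-|Hb]; [apply Rmax_l|]. eapply Rle_trans; [apply Hub, Hb | apply Rmax_r].
    + intros z M HM. apply Rmax_lub; [apply HM; left; auto|].
      apply Hlub. intros; apply HM; right; auto.
Qed.

Lemma sigma_map_None N p : sigma_map N p (fun _ => None) = None.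
Proof.
  unfold sigma_map. induction (seq 0 (N - p + 1)) as [|a l IH]; simpl; auto.
  rewrite phi_Some, IH. reflexivity.
Qed.

(* Each coefficient is the largest shift of [phif N p a] staying below [g]. *)
Lemma sigma_map_surjective N p f : (2 <= p)%nat -> in_E N p f ->
  exists xs : nat -> Rmx, elt_eq p f (sigma_map N p xs).
Proof.
  intros Hp Hf. assert (Hp1 : 1 < INR p) by (apply lt_1_INR; lia).
  destruct f as [g|]; [|exists (fun _ => None); rewrite sigma_map_None; exact I].
  apply in_E_admissible in Hf; auto.
  destruct (pw_aff_bounded_below _ _ _ (proj1 (proj2 Hf))) as [K HK].
  assert (Hne : forall a, exists c0, forall w, 1 <= w <= INR p -> phif N p a w + c0 <= g w).
  { intros a. exists K. intros w Hw. specialize (HK w Hw). pose proof (phif_nonpos N p a w Hw). lra. }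
  set (X := fun a => proj1_sig (largest_shift_below 1 (INR p) (phif N p a) g ltac:(lra) (Hne a))).
  assert (HX : forall a, (forall w, 1 <= w <= INR p -> phif N p a w + X a <= g w) /\
                 forall c, (forall w, 1 <= w <= INR p -> phif N p a w + c <= g w) -> c <= X a)
    by (intros a; exact (proj2_sig (largest_shift_below _ _ _ _ _ (Hne a)))).
  exists (fun a => Some (X a)). unfold sigma_map.
  rewrite (map_ext _ (fun a => Some (fun z => phif N p a z + X a)))
    by (intros; rewrite phi_Some; reflexivity).
  destruct (fold_ejoin_Some (fun a z => phif N p a z + X a) (seq 0 (N - p + 1)))
    as [h [Eh [Hub Hlub]]]; [rewrite Nat.add_comm; discriminate|].
  rewrite Eh. intros z Hz. apply Rle_antisym.
  - destruct (admissible_phif_support N p g z Hp Hf Hz) as [a [c [HaN [Hbelow Hgz]]]].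
    assert (c <= X a) by (apply HX; auto).
    eapply Rle_trans; [|apply (Hub z a), in_seq; lia]. lra.
  - apply Hlub. intros a _. apply HX, Hz.
Qed.

Lemma elt_eq_sym p f g : elt_eq p f g -> elt_eq p g f.
Proof. destruct f, g; simpl; auto. intros H x Hx. rewrite H; auto. Qed.

Lemma extremal_eq_fold_join N p f l : 1 < INR p -> extremal N p f ->
  (forall G, In G l -> in_E N p G) ->
  elt_eq p f (fold_right ejoin None l) -> exists G, In G l /\ elt_eq p f G.
Proof.
  intros Hp [HfE [Hf Hext]] Hl. induction l as [|G l IH]; simpl; intros Hfl.
  - destruct f; simpl in Hfl; [contradiction | congruence].
  - destruct (Hext G (fold_right ejoin None l)) as [HG|Hrest];
      auto using in_eq, elt_eq_sym, in_E_fold_join, in_cons.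
    + exists G. auto using in_eq, elt_eq_sym.
    + destruct IH as [G' [HG' Hfg']]; auto using in_cons, elt_eq_sym.
      exists G'. auto using in_cons.
Qed.

Lemma same_ray_shift p f F c : elt_eq p f (eshift F (Some c)) -> same_ray p f F.
Proof.
  intros Hf h. destruct F as [k|], f as [g|]; simpl in Hf; try contradiction.
  - split; intros [[d|] Hd].
    + exists (Some (c + d)). destruct h; simpl in *; auto. intros z Hz. rewrite Hd, Hf; auto. ring.
    + exists None. auto.
    + exists (Some (d - c)). destruct h; simpl in *; auto. intros z Hz. rewrite Hd, Hf; auto. ring.
    + exists None. auto.
  - reflexivity.
Qed.

Theorem propositionA2 (p N : nat) (hp : prime (Z.of_nat p)) (hN : (p <= N)%nat) :
  (forall a, (a <= N - p)%nat -> extremal N p (phi N p a)) /\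
  (forall f, extremal N p f -> exists a, (a <= N - p)%nat /\ same_ray p f (phi N p a)) /\
  (forall xs : nat -> Rmx, in_E N p (sigma_map N p xs)) /\
  (forall f, in_E N p f -> exists xs : nat -> Rmx, elt_eq p f (sigma_map N p xs)).
Proof.
  assert (Hp : (2 <= p)%nat) by (apply prime_ge_2 in hp; lia).
  assert (Hp1 : 1 < INR p) by (apply lt_1_INR; lia).
  assert (Hterms : forall xs G, In G (map (fun a => eshift (phi N p a) (xs a)) (seq 0 (N - p + 1))) ->
            exists a, (a <= N - p)%nat /\ G = eshift (phi N p a) (xs a)).
  { intros xs G HG. apply in_map_iff in HG as [a [<- Ha]]. apply in_seq in Ha.
    exists a. split; [lia | auto]. }
  assert (Hterms_in_E : forall xs G, In G (map (fun a => eshift (phi N p a) (xs a)) (seq 0 (N - p + 1))) ->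
            in_E N p G).
  { intros xs G HG. destruct (Hterms xs G HG) as [a [Ha ->]].
    apply in_E_shift, extremal_phi; auto. }
  split; [|split; [|split]].
  - intros a Ha. apply extremal_phi; auto.
  - intros f Hf. destruct (sigma_map_surjective N p f Hp (proj1 Hf)) as [xs Hxs].
    destruct (extremal_eq_fold_join N p f _ Hp1 Hf (Hterms_in_E xs) Hxs) as [G [HG HfG]].
    destruct (Hterms xs G HG) as [a [Ha ->]]. exists a. split; [auto|].
    destruct (xs a) as [c|]; [exact (same_ray_shift p f (phi N p a) c HfG)|].
    rewrite phi_Some in HfG. destruct Hf as [_ [Hf _]], f; [contradiction | congruence].
  - intros xs. apply in_E_fold_join; [auto | apply Hterms_in_E].
  - intros f Hf. apply sigma_map_surjective; auto.
Qed.
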